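(* For every positive integer $r$, $$\sum_{n=1}^{\infty}\frac{1}{n(2n+2r-1)4^n}\frac{\binom{4n-2}{2n-1}}{\binom{2n+2r-2}{n+r-1}}=\frac{1}{(2r-1)\binom{2r-2}{r-1}}-\frac{1}{2^{2r-2}}I(r),$$ where $$I(r)=\frac{6\cdot 16^{r-1}}{r\binom{4r}{2r}}\left(\frac{4}{3}-\sqrt{2}\sum_{k=0}^{r-1} \frac{\binom{4k}{2k}}{(6k+3)16^k}\right).$$ *)

From Stdlib Require Import Reals Lra Lia.
From Coquelicot Require Import Coquelicot.
Open Scope R_scope.

Definition binomR (n k : nat) : R := Binomial.C n k.

Definition term (r n : nat) : R :=
  / (INR n * (2 * INR n + 2 * INR r - 1) * 4 ^ n)
  * (binomR (4 * n - 2) (2 * n - 1) / binomR (2 * n + 2 * r - 2) (n + r - 1)).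

Definition I_r (r : nat) : R :=
  6 * 16 ^ (r - 1) / (INR r * binomR (4 * r) (2 * r)) *
  (4 / 3 - sqrt 2 * sum_f_R0 (fun k => binomR (4 * k) (2 * k) / ((6 * INR k + 3) * 16 ^ k)) (r - 1)).

From Stdlib Require Import Reals Lra Lia.
From Coquelicot Require Import Coquelicot.
Open Scope R_scope.

(* Write w(m) = C(2m,m)/4^m.  For r = m+1 the (k+1)-st term of the series is
   4^-m s_m(k) with s_m(k) = w(2k+1) / (4 (k+1) (2k+2m+3) w(k+m+1)).
   Since s_m(k+1)/s_m(k) and s_{m+1}(k)/s_m(k) are rational in k, Gosper's
   algorithm finds rational multiples of s_m(k) whose differences in k are
   s_0(k) and s_m(k) - b_m s_{m+1}(k).  Summing these telescopes gives the
   value for m = 0 and a first-order recurrence in m, solved by the closed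
   form.  The boundary terms of the telescopes converge because
   w(2k)/w(k) -> 1/sqrt 2, which follows from Wallis' bounds: w(n)^2 n
   increases and w(n)^2 (2n+1) decreases. *)

Lemma is_lim_seq_inv_INR_S : is_lim_seq (fun k => / (INR k + 1)) 0.
Proof.
  apply (is_lim_seq_inv _ p_infty); [|discriminate].
  apply is_lim_seq_ext with (fun k => INR (S k)); [intro k; apply S_INR|].
  apply (is_lim_seq_incr_1 INR p_infty), is_lim_seq_INR.
Qed.

Lemma is_lim_seq_of_rate (x : nat -> R) (L C : R) :
  (forall k, Rabs (x k - L) <= C / (INR k + 1)) -> is_lim_seq x L.
Proof.
  intro Hx.
  assert (Hrate : is_lim_seq (fun k => C * / (INR k + 1)) 0).
  { replace 0 with (C * 0) by ring.
    apply (is_lim_seq_scal_l _ C 0), is_lim_seq_inv_INR_S. }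
  apply is_lim_seq_le_le with (fun k => L - C * / (INR k + 1)) (fun k => L + C * / (INR k + 1)).
  - intro k; specialize (Hx k); apply Rabs_le_between in Hx; unfold Rdiv in Hx; lra.
  - replace (Finite L) with (Finite (L - 0)) by (f_equal; ring).
    apply is_lim_seq_minus'; [apply is_lim_seq_const | exact Hrate].
  - replace (Finite L) with (Finite (L + 0)) by (f_equal; ring).
    apply is_lim_seq_plus'; [apply is_lim_seq_const | exact Hrate].
Qed.

Lemma is_lim_seq_shifted_ratio (x : nat -> R) (c : R) :
  1 <= c -> (forall k, INR k <= x k) -> is_lim_seq (fun k => (x k + 1) / (x k + c)) 1.
Proof.
  intros Hc Hx. apply is_lim_seq_of_rate with (c - 1). intro k.
  assert (Hk := pos_INR k). specialize (Hx k).
  replace ((x k + 1) / (x k + c) - 1) with (- ((c - 1) / (x k + c))) by (field; lra).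
  rewrite Rabs_Ropp, Rabs_pos_eq by (apply Rdiv_le_0_compat; lra).
  apply Rmult_le_compat_l; [lra|]. apply Rinv_le_contravar; lra.
Qed.

Lemma is_series_telescope (f G : nat -> R) (L : R) :
  (forall k, f k = G k - G (S k)) -> is_lim_seq G L -> is_series f (G O - L).
Proof.
  intros Hf HG. unfold is_series. change (is_lim_seq (sum_n f) (G O - L)).
  assert (Hsum : forall n, sum_n f n = G O - G (S n)).
  { induction n as [|n IH].
    - rewrite sum_O, Hf; reflexivity.
    - rewrite sum_Sn, IH, Hf. unfold plus; simpl. ring. }
  apply is_lim_seq_ext with (fun n => G O - G (S n)); [intro n; now rewrite Hsum|].
  apply is_lim_seq_minus'; [apply is_lim_seq_const|].
  apply (is_lim_seq_incr_1 G L), HG.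
Qed.

Lemma is_series_of_minus_scal (a b : nat -> R) (la l c : R) :
  c <> 0 -> is_series a la -> is_series (fun k => a k - c * b k) l ->
  is_series b ((la - l) / c).
Proof.
  intros Hc Ha Hab.
  assert (H := is_series_scal_r (/ c) _ _ (is_series_minus _ _ _ _ Ha Hab)).
  refine (is_series_ext _ _ _ _ H).
  intro k. unfold minus, plus, opp; simpl. field; assumption.
Qed.

Definition wallis (m : nat) : R := binomR (2 * m) m / 4 ^ m.

Lemma binomR_central (m : nat) : binomR (2 * m) m = 4 ^ m * wallis m.
Proof. unfold wallis. field. apply pow_nonzero; lra. Qed.

Lemma wallis_0 : wallis 0 = 1.
Proof. unfold wallis, binomR, Binomial.C. simpl. field. Qed.

Lemma wallis_S (m : nat) : wallis (S m) = wallis m * (2 * INR m + 1) / (2 * INR m + 2).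
Proof.
  unfold wallis, binomR, Binomial.C.
  replace (2 * S m - S m)%nat with (S m) by lia.
  replace (2 * m - m)%nat with m by lia.
  replace (2 * S m)%nat with (S (S (2 * m))) by lia.
  rewrite !fact_simpl, !mult_INR, !S_INR, mult_INR. simpl (INR 2). simpl (4 ^ S m).
  assert (H2m := INR_fact_neq_0 (2 * m)). assert (Hm := INR_fact_neq_0 m).
  assert (H4 : 4 ^ m <> 0) by (apply pow_nonzero; lra).
  assert (H := pos_INR m).
  field. repeat split; try assumption; lra.
Qed.

Lemma wallis_gt0 (m : nat) : 0 < wallis m.
Proof.
  induction m as [|m IH]; [rewrite wallis_0; lra|].
  rewrite wallis_S. assert (H := pos_INR m).
  apply Rdiv_lt_0_compat; [apply Rmult_lt_0_compat|]; lra.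
Qed.

Lemma wallis_lower_growing : Un_growing (fun n => wallis n ^ 2 * INR n).
Proof.
  intro n. rewrite wallis_S, S_INR. assert (H := pos_INR n). assert (Hw := wallis_gt0 n).
  replace ((wallis n * (2 * INR n + 1) / (2 * INR n + 2)) ^ 2 * (INR n + 1))
    with (wallis n ^ 2 * ((2 * INR n + 1) ^ 2 / (4 * (INR n + 1)))) by (field; lra).
  apply Rmult_le_compat_l; [nra|].
  apply Rmult_le_reg_r with (4 * (INR n + 1)); [lra|]. field_simplify; nra.
Qed.

Lemma wallis_upper_decreasing : Un_decreasing (fun n => wallis n ^ 2 * (2 * INR n + 1)).
Proof.
  intro n. rewrite wallis_S, S_INR. assert (H := pos_INR n). assert (Hw := wallis_gt0 n).
  replace ((wallis n * (2 * INR n + 1) / (2 * INR n + 2)) ^ 2 * (2 * (INR n + 1) + 1))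
    with (wallis n ^ 2 * ((2 * INR n + 1) ^ 2 * (2 * INR n + 3) / (4 * (INR n + 1) ^ 2)))
    by (field; lra).
  apply Rmult_le_compat_l; [nra|].
  apply Rmult_le_reg_r with (4 * (INR n + 1) ^ 2); [nra|]. field_simplify; nra.
Qed.

Lemma sqrt2_half_approx (t x : R) :
  0 <= t -> 0 < x -> 1 / 2 <= x ^ 2 -> x ^ 2 * (4 * t + 1) <= 2 * t + 1 ->
  Rabs (x - sqrt 2 / 2) <= 1 / (t + 1).
Proof.
  intros Ht Hx Hlow Hup.
  set (s := sqrt 2 / 2).
  assert (Hs2 : s * s = 1 / 2) by (unfold s; assert (H := sqrt_sqrt 2); lra).
  assert (Hs : 1 / 2 < s).
  { unfold s. assert (1 < sqrt 2) by (rewrite <- sqrt_1; apply sqrt_lt_1; lra). lra. }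
  assert (Hxs : s <= x) by nra.
  assert (Hx2 : x ^ 2 - 1 / 2 <= 1 / (2 * (4 * t + 1))).
  { apply Rmult_le_reg_r with (2 * (4 * t + 1)); [lra|]. field_simplify; nra. }
  assert (Hfrac : 1 / (2 * (4 * t + 1)) <= 1 / (t + 1)).
  { apply Rmult_le_compat_l; [lra|]. apply Rinv_le_contravar; lra. }
  rewrite Rabs_pos_eq by lra. nra.
Qed.

Lemma wallis_double_ratio_sq_bounds (k : nat) :
  1 / 2 <= (wallis (2 * k) / wallis k) ^ 2 /\
  (wallis (2 * k) / wallis k) ^ 2 * (4 * INR k + 1) <= 2 * INR k + 1.
Proof.
  destruct k as [|k].
  - simpl. rewrite wallis_0. split; lra.
  - assert (Hlow := growing_prop _ (2 * S k) (S k) wallis_lower_growing ltac:(lia)).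
    assert (Hup := decreasing_prop _ (S k) (2 * S k) wallis_upper_decreasing ltac:(lia)).
    cbv beta in Hlow, Hup. apply Rge_le in Hlow.
    rewrite mult_INR in Hlow, Hup. simpl (INR 2) in Hlow, Hup.
    assert (Hw := wallis_gt0 (S k)). assert (Hk : 0 < INR (S k)) by (apply lt_0_INR; lia).
    set (x := wallis (2 * S k) / wallis (S k)).
    replace (wallis (2 * S k)) with (x * wallis (S k)) in Hlow, Hup by (unfold x; field; lra).
    rewrite Rpow_mult_distr in Hlow, Hup.
    assert (Hw2 : 0 < wallis (S k) ^ 2) by (apply pow_lt; lra).
    set (P := wallis (S k) ^ 2) in *.
    assert (HPk : 0 < P * INR (S k)) by (apply Rmult_lt_0_compat; lra).
    split; nra.
Qed.

Lemma is_lim_seq_wallis_double_ratio :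
  is_lim_seq (fun k => wallis (2 * k) / wallis k) (sqrt 2 / 2).
Proof.
  apply is_lim_seq_of_rate with 1. intro k.
  destruct (wallis_double_ratio_sq_bounds k) as [Hlow Hup].
  apply sqrt2_half_approx; try assumption; [apply pos_INR|].
  apply Rdiv_lt_0_compat; apply wallis_gt0.
Qed.

Lemma is_lim_seq_wallis_shift_ratio (j : nat) :
  is_lim_seq (fun k => wallis (k + j) / wallis k) 1.
Proof.
  induction j as [|j IH].
  - apply is_lim_seq_ext with (fun _ => 1); [|apply is_lim_seq_const].
    intro k. rewrite Nat.add_0_r. assert (H := wallis_gt0 k). field; lra.
  - apply is_lim_seq_ext with
      (fun k => wallis (k + j) / wallis k * ((2 * INR (k + j) + 1) / (2 * INR (k + j) + 2))).
    + intro k. rewrite Nat.add_succ_r, wallis_S.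
      assert (H := wallis_gt0 k). assert (H2 := pos_INR (k + j)). field; lra.
    + replace (Finite 1) with (Finite (1 * 1)) by (f_equal; ring).
      apply is_lim_seq_mult'; [exact IH|].
      apply is_lim_seq_shifted_ratio; [lra|].
      intro k. rewrite plus_INR. assert (H := pos_INR j). assert (H' := pos_INR k). lra.
Qed.

Lemma is_lim_seq_wallis_odd_ratio (m : nat) :
  is_lim_seq (fun k => wallis (2 * k + 1) / wallis (k + m + 1)) (sqrt 2 / 2).
Proof.
  apply is_lim_seq_ext with (fun k => (2 * INR (2 * k) + 1) / (2 * INR (2 * k) + 2)
    * (wallis (2 * k) / wallis k) / (wallis (k + (m + 1)) / wallis k)).
  - intro k. rewrite (Nat.add_1_r (2 * k)), wallis_S, Nat.add_assoc.
    assert (H := wallis_gt0 k). assert (H1 := wallis_gt0 (2 * k)).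
    assert (H2 := wallis_gt0 (k + m + 1)). assert (H3 := pos_INR (2 * k)).
    field; lra.
  - replace (sqrt 2 / 2) with (1 * (sqrt 2 / 2) / 1) by field.
    apply is_lim_seq_div'; [apply is_lim_seq_mult'|apply is_lim_seq_wallis_shift_ratio|lra].
    + apply is_lim_seq_shifted_ratio; [lra|].
      intro k. rewrite mult_INR. simpl (INR 2). assert (H := pos_INR k). lra.
    + apply is_lim_seq_wallis_double_ratio.
Qed.

Definition summand (m k : nat) : R :=
  wallis (2 * k + 1) / (4 * (INR k + 1) * (2 * INR k + 2 * INR m + 3) * wallis (k + m + 1)).

Lemma summand_Sk (m k : nat) : summand m (S k) = summand m k *
  ((4 * INR k + 3) * (4 * INR k + 5) * (INR k + 1) * (2 * INR k + 2 * INR m + 4) /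
   ((4 * INR k + 4) * (4 * INR k + 6) * (INR k + 2) * (2 * INR k + 2 * INR m + 5))).
Proof.
  unfold summand.
  replace (2 * S k + 1)%nat with (S (S (2 * k + 1))) by lia.
  replace (S k + m + 1)%nat with (S (k + m + 1)) by lia.
  rewrite !wallis_S, !S_INR, !plus_INR, mult_INR. simpl (INR 2). simpl (INR 1).
  assert (H := wallis_gt0 (2 * k + 1)). assert (H1 := wallis_gt0 (k + m + 1)).
  assert (H2 := pos_INR k). assert (H3 := pos_INR m).
  field. repeat split; lra.
Qed.

Lemma summand_Sm (m k : nat) :
  summand (S m) k = summand m k * ((2 * INR k + 2 * INR m + 4) / (2 * INR k + 2 * INR m + 5)).
Proof.
  unfold summand.
  replace (k + S m + 1)%nat with (S (k + m + 1)) by lia.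
  rewrite !wallis_S, !S_INR, !plus_INR. simpl (INR 1).
  assert (H := wallis_gt0 (2 * k + 1)). assert (H1 := wallis_gt0 (k + m + 1)).
  assert (H2 := pos_INR k). assert (H3 := pos_INR m).
  field. repeat split; lra.
Qed.

Definition summand0_antidiff (k : nat) : R :=
  - (4 / 3) * (2 * INR k + 1) * (2 * INR k + 3) * summand 0 k.

Definition summand_step_coef (m : nat) : R :=
  (4 * INR m + 5) * (4 * INR m + 7) / (8 * (INR m + 1) * (2 * INR m + 3)).

Definition summand_step_antidiff (m k : nat) : R :=
  (INR k + 1) * (2 * INR k + 1) / ((INR m + 1) * (2 * INR m + 3)) * summand m k.

Lemma summand0_telescope (k : nat) :
  summand 0 k = summand0_antidiff k - summand0_antidiff (S k).
Proof.
  unfold summand0_antidiff. rewrite summand_Sk, S_INR. simpl (INR 0).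
  assert (H := pos_INR k). field. lra.
Qed.

Lemma summand_step_telescope (m k : nat) :
  summand m k - summand_step_coef m * summand (S m) k =
  summand_step_antidiff m k - summand_step_antidiff m (S k).
Proof.
  unfold summand_step_antidiff, summand_step_coef. rewrite summand_Sk, summand_Sm, S_INR.
  assert (H := pos_INR k). assert (H' := pos_INR m). field. repeat split; lra.
Qed.

Lemma summand_step_coef_neq0 (m : nat) : summand_step_coef m <> 0.
Proof.
  unfold summand_step_coef. assert (H := pos_INR m).
  apply Rgt_not_eq, Rdiv_lt_0_compat; nra.
Qed.

Lemma is_lim_seq_summand0_antidiff : is_lim_seq summand0_antidiff (- sqrt 2 / 3).
Proof.
  apply is_lim_seq_ext with (fun k => - (2 / 3) *
    ((2 * INR k + 1) / (2 * INR k + 2) * (wallis (2 * k + 1) / wallis (k + 0 + 1)))).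
  - intro k. unfold summand0_antidiff, summand.
    assert (H := wallis_gt0 (2 * k + 1)). assert (H1 := wallis_gt0 (k + 0 + 1)).
    assert (H2 := pos_INR k). simpl (INR 0). field. repeat split; lra.
  - replace (- sqrt 2 / 3) with (- (2 / 3) * (1 * (sqrt 2 / 2))) by field.
    apply (is_lim_seq_scal_l _ _ (1 * (sqrt 2 / 2))).
    apply is_lim_seq_mult'; [|apply is_lim_seq_wallis_odd_ratio].
    apply is_lim_seq_shifted_ratio; [lra|]. intro k; assert (H := pos_INR k); lra.
Qed.

Lemma is_lim_seq_summand_step_antidiff (m : nat) :
  is_lim_seq (summand_step_antidiff m) (sqrt 2 / (8 * (INR m + 1) * (2 * INR m + 3))).
Proof.
  assert (Hm := pos_INR m).
  apply is_lim_seq_ext with (fun k => / (4 * (INR m + 1) * (2 * INR m + 3)) *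
    ((2 * INR k + 1) / (2 * INR k + (2 * INR m + 3)) * (wallis (2 * k + 1) / wallis (k + m + 1)))).
  - intro k. unfold summand_step_antidiff, summand.
    assert (H := wallis_gt0 (2 * k + 1)). assert (H1 := wallis_gt0 (k + m + 1)).
    assert (H2 := pos_INR k). field. repeat split; lra.
  - replace (sqrt 2 / (8 * (INR m + 1) * (2 * INR m + 3)))
      with (/ (4 * (INR m + 1) * (2 * INR m + 3)) * (1 * (sqrt 2 / 2))) by (field; lra).
    apply (is_lim_seq_scal_l _ _ (1 * (sqrt 2 / 2))).
    apply is_lim_seq_mult'; [|apply is_lim_seq_wallis_odd_ratio].
    apply is_lim_seq_shifted_ratio; [lra|]. intro k; assert (H := pos_INR k); lra.
Qed.

Definition summand_sum (m : nat) : R :=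
  / ((2 * INR m + 1) * wallis m) - 3 / (8 * (INR m + 1) * wallis (2 * m + 2)) *
    (4 / 3 - sqrt 2 * sum_f_R0 (fun k => wallis (2 * k) / (6 * INR k + 3)) m).

Lemma summand_sum_0 : summand_sum 0 = summand0_antidiff 0 - - sqrt 2 / 3.
Proof.
  unfold summand_sum, summand0_antidiff, summand. simpl.
  rewrite !wallis_S, wallis_0. simpl INR. field.
Qed.

Lemma summand_sum_S (m : nat) : summand_sum (S m) =
  (summand_sum m - (summand_step_antidiff m 0 - sqrt 2 / (8 * (INR m + 1) * (2 * INR m + 3))))
  / summand_step_coef m.
Proof.
  unfold summand_sum, summand_step_antidiff, summand_step_coef, summand. rewrite tech5.
  replace (2 * S m + 2)%nat with (S (S (2 * m + 2))) by lia.
  replace (2 * S m)%nat with (2 * m + 2)%nat by lia.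
  replace (0 + m + 1)%nat with (S m) by lia.
  replace (2 * 0 + 1)%nat with 1%nat by reflexivity.
  rewrite !wallis_S, wallis_0, !S_INR, !plus_INR, mult_INR. simpl INR.
  assert (H := wallis_gt0 m). assert (H1 := wallis_gt0 (2 * m + 2)). assert (H2 := pos_INR m).
  field. repeat split; lra.
Qed.

Lemma is_series_summand (m : nat) : is_series (summand m) (summand_sum m).
Proof.
  induction m as [|m IH].
  - rewrite summand_sum_0.
    exact (is_series_telescope _ _ _ summand0_telescope is_lim_seq_summand0_antidiff).
  - rewrite summand_sum_S.
    exact (is_series_of_minus_scal _ _ _ _ _ (summand_step_coef_neq0 m) IH
      (is_series_telescope _ _ _ (summand_step_telescope m) (is_lim_seq_summand_step_antidiff m))).
Qed.

Lemma term_S_eq_summand (m k : nat) : term (S m) (S k) = summand m k / 4 ^ m.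
Proof.
  unfold term, summand.
  replace (4 * S k - 2)%nat with (2 * (2 * k + 1))%nat by lia.
  replace (2 * S k - 1)%nat with (2 * k + 1)%nat by lia.
  replace (2 * S k + 2 * S m - 2)%nat with (2 * (k + m + 1))%nat by lia.
  replace (S k + S m - 1)%nat with (k + m + 1)%nat by lia.
  rewrite !binomR_central.
  assert (Hnum : 4 ^ (2 * k + 1) = 4 ^ k * 4 ^ k * 4)
    by (replace (2 * k + 1)%nat with (k + k + 1)%nat by lia; rewrite !pow_add; ring).
  rewrite Hnum, !pow_add, !S_INR. simpl (4 ^ S k).
  assert (H := wallis_gt0 (2 * k + 1)). assert (H1 := wallis_gt0 (k + m + 1)).
  assert (H2 := pos_INR k). assert (H3 := pos_INR m).
  assert (Hk : 0 < 4 ^ k) by (apply pow_lt; lra). assert (Hm : 0 < 4 ^ m) by (apply pow_lt; lra).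
  field. repeat split; lra.
Qed.

Lemma closed_form_eq_summand_sum (m : nat) :
  / ((2 * INR (S m) - 1) * binomR (2 * S m - 2) (S m - 1)) - / 2 ^ (2 * S m - 2) * I_r (S m)
  = summand_sum m / 4 ^ m.
Proof.
  unfold summand_sum, I_r.
  replace (2 * S m - 2)%nat with (2 * m)%nat by lia.
  replace (S m - 1)%nat with m by lia.
  replace (4 * S m)%nat with (2 * (2 * m + 2))%nat by lia.
  replace (2 * S m)%nat with (2 * m + 2)%nat by lia.
  rewrite !binomR_central.
  rewrite (sum_eq _ (fun k => wallis (2 * k) / (6 * INR k + 3))).
  2:{ intros k _. replace (4 * k)%nat with (2 * (2 * k))%nat by lia.
      rewrite binomR_central, pow_mult. replace (4 ^ 2) with 16 by ring.
      assert (H := pow_lt 16 k). assert (H2 := pos_INR k). field. lra. }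
  assert (H2m : 2 ^ (2 * m) = 4 ^ m) by (rewrite pow_mult; f_equal; ring).
  assert (H16 : 16 ^ m = 4 ^ m * 4 ^ m) by (rewrite <- Rpow_mult_distr; f_equal; ring).
  assert (H4 : 4 ^ (2 * m + 2) = 4 ^ m * 4 ^ m * 16)
    by (replace (2 * m + 2)%nat with (m + m + 2)%nat by lia; rewrite !pow_add; ring).
  rewrite H2m, H16, H4, S_INR.
  assert (H := wallis_gt0 m). assert (H1 := wallis_gt0 (2 * m + 2)). assert (H3 := pos_INR m).
  assert (Hm : 0 < 4 ^ m) by (apply pow_lt; lra).
  field. repeat split; lra.
Qed.

Theorem theorem4p0p2 (r : nat) (hr : (1 <= r)%nat) :
  is_series (fun k : nat => term r (S k))
    (/ ((2 * INR r - 1) * binomR (2 * r - 2) (r - 1)) - / 2 ^ (2 * r - 2) * I_r r).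
Proof.
  destruct r as [|m]; [lia|].
  rewrite closed_form_eq_summand_sum.
  apply is_series_ext with (fun k => summand m k / 4 ^ m); [intro k; symmetry; apply term_S_eq_summand|].
  apply is_series_scal_r, is_series_summand.
Qed.
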